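(* For each integer $n\geq 3$, the Johnson graph $J(n,2)$ satisfies $\operatorname{tww}(J(n,2))\leq 2(n-3)$.
   Context: All graphs are finite and simple. The Johnson graph $J(n,2)$ has vertex set the 2-element subsets of $\{1,\dots,n\}$, two vertices $S,S'$ being adjacent iff $|S\cap S'|=1$. A trigraph is a graph whose edges are each colored red or black; a graph is viewed as a trigraph with all edges black; the red degree of a vertex is the number of red edges incident to it. For a partition $\mathcal{P}$ of $V(G)$, the quotient trigraph $G/\mathcal{P}$ has vertex set $\mathcal{P}$; two distinct parts $U,W$ are joined by a black edge if every pair $\{u,w\}$ with $u\in U,w\in W$ is a black edge of $G$, are non-adjacent if no such pair is an edge, and are joined by a red edge otherwise. A contraction sequence of an $N$-vertex trigraph $G$ is a sequence $\mathcal{P}_N,\dots,\mathcal{P}_1$ of partitions of $V(G)$ where $\mathcal{P}_N$ is the partition into singletons and each $\mathcal{P}_i$ arises from $\mathcal{P}_{i+1}$ by merging two parts; its width is the maximum red degree over all $G/\mathcal{P}_i$, and the twin-width $\operatorname{tww}(G)$ is the minimum width of a contraction sequence. *)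

From mathcomp Require Import all_boot.
Set Implicit Arguments. Unset Strict Implicit. Unset Printing Implicit Defensive.

(* Trigraphs on a finite vertex type T: [black] and [red] are the (symmetric,
   irreflexive, disjoint) black and red edge relations. A graph is the trigraph
   whose red relation is empty. *)
Section Twinwidth.
Variable T : finType.
Variables (black red : rel T).

Definition tedge (x y : T) : bool := black x y || red x y.

Definition qblack (U W : {set T}) : bool :=
  [forall u in U, forall w in W, black u w].
Definition qnonadj (U W : {set T}) : bool :=
  [forall u in U, forall w in W, ~~ tedge u w].
Definition qred (U W : {set T}) : bool :=
  [&& U != W, ~~ qblack U W & ~~ qnonadj U W].

Definition red_degree (P : {set {set T}}) (U : {set T}) : nat :=
  #|[set W in P | qred U W]|.

Definition quotient_width (P : {set {set T}}) : nat :=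
  \max_(U in P) red_degree P U.

Definition singleton_partition : {set {set T}} := [set [set x] | x : T].

Definition merge_step (P Q : {set {set T}}) : bool :=
  [exists A in P, exists B in P,
     (A != B) && (Q == (P :\ A :\ B) :|: [set A :|: B])].

Definition contraction_sequence (s : seq {set {set T}}) : Prop :=
  match s with
  | [::] => False
  | P :: s' => [/\ P = singleton_partition, path merge_step P s' & size s = #|T|]
  end.

Definition seq_width (s : seq {set {set T}}) : nat :=
  \max_(P <- s) quotient_width P.

Definition tww_le (k : nat) : Prop :=
  exists s, contraction_sequence s /\ seq_width s <= k.

End Twinwidth.

Definition graph_tww_le (T : finType) (e : rel T) (k : nat) : Prop :=
  tww_le e (fun _ _ => false) k.

Definition johnson_vertex (n : nat) := {S : {set 'I_n} | #|S| == 2}.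

Arguments johnson_vertex : clear implicits.
Definition johnson_adj (n : nat) : rel (johnson_vertex n) :=
  fun S S' => #|val S :&: val S'| == 1.
Arguments johnson_adj n : clear implicits.

From mathcomp Require Import all_boot zify.
Set Implicit Arguments. Unset Strict Implicit. Unset Printing Implicit Defensive.

(* Vertices of J(n,2) are the pairs {a < b} of elements of {0, ..., n-1}.  For
   k <= n - 1 and m < max(k,1) let P(k,m) be the partition in which {a,b} is a singleton part
   when b < k - 1, or b = k - 1 and m <= a; each remaining pair with a < k lies in the
   "star" part of a, and all remaining pairs with k <= a form one last part.  P(n-1,0)
   is discrete and P(0,0) has a single part.  Passing from P(k,m) to P(k,m+1) moves
   {m,k-1} into the star of m, and passing from P(k,k-1) to P(k-1,0) merges the star of
   k-1 into the last part; both are merges of two parts (for k = n-1 the last part is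
   empty and P(n-1,n-2) = P(n-2,0)).  Between two parts of P(k,m), adjacency is
   homogeneous unless the second part belongs to an explicit list, determined by the
   first, of at most 2(n-3) parts, which bounds every red degree.  For n = 3 the graph
   is complete and no red edge ever appears. *)

Section FibrePartition.
Variables (T : finType) (L : eqType).
Implicit Types (f g : T -> L) (x y : T).

Definition fibre f x : {set T} := [set y | f y == f x].
Definition fibre_partition f : {set {set T}} := [set fibre f x | x : T].

Lemma fibre_eq f x y : (fibre f x == fibre f y) = (f x == f y).
Proof.
apply/eqP/eqP => [fxy | fxy]; last by apply/setP => z; rewrite !inE fxy.
have : x \in fibre f y by rewrite -fxy inE.
by rewrite inE => /eqP.
Qed.

Lemma fibre_partitionP f W : reflect (exists x, W = fibre f x) (W \in fibre_partition f).
Proof. by apply: (iffP imsetP) => [[x _ ->] | [x ->]]; exists x. Qed.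

Lemma eq_fibre_partition f g :
  (forall x y, (f x == f y) = (g x == g y)) -> fibre_partition f = fibre_partition g.
Proof.
move=> efg; apply: eq_imset => x.
by apply/setP => y; rewrite !inE efg.
Qed.

Definition relabel (l1 l2 l : L) : L := if l == l1 then l2 else l.

Section Merge.
Variables (f g : T -> L) (x1 x2 : T).
Hypothesis f12 : f x1 != f x2.
Hypothesis gE : g =1 relabel (f x1) (f x2) \o f.
Let A := fibre f x1.
Let B := fibre f x2.

Lemma fibre_relabel x :
  fibre g x = if f x \in [:: f x1; f x2] then A :|: B else fibre f x.
Proof.
apply/setP => y; case: ifP; rewrite !inE !gE /= {1}/relabel.
  move=> fx12; have -> : relabel (f x1) (f x2) (f x) = f x2.
    by rewrite /relabel; case: eqVneq fx12 => //= _ /eqP.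
  by case: (eqVneq (f y) (f x1)) => [-> | _]; rewrite ?eqxx.
move=> /norP [/negbTE fx1 /negbTE fx2]; rewrite /relabel fx1.
by case: (eqVneq (f y) (f x1)) => [-> | _] //; rewrite eq_sym fx2 eq_sym fx1.
Qed.

Lemma fibre_partition_relabel :
  fibre_partition g = fibre_partition f :\ A :\ B :|: [set A :|: B].
Proof.
apply/setP => W; rewrite !inE; apply/fibre_partitionP/idP => [[x ->] | ].
  rewrite fibre_relabel; case: ifP => [_|]; first by rewrite eqxx orbT.
  rewrite !inE !fibre_eq => /norP [fx1 fx2].
  by rewrite fx1 fx2; apply/orP; left; apply/fibre_partitionP; exists x.
case/orP => [/and3P [WB WA /fibre_partitionP [x Wx]] | /eqP ->].
  exists x; rewrite fibre_relabel Wx.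
  by move: WA WB; rewrite Wx !fibre_eq !inE => /negbTE -> /negbTE ->.
by exists x1; rewrite fibre_relabel !inE eqxx.
Qed.

Lemma merge_step_fibre_partition :
  merge_step (fibre_partition f) (fibre_partition g) /\
  #|fibre_partition g| = #|fibre_partition f|.-1.
Proof.
have AB : A != B by rewrite fibre_eq.
have [AP BP] : A \in fibre_partition f /\ B \in fibre_partition f.
  by split; apply/fibre_partitionP; [exists x1 | exists x2].
have ABnP : A :|: B \notin fibre_partition f :\ A :\ B.
  rewrite !inE; apply/negP => /and3P [_ ABA /fibre_partitionP [x ABx]].
  have : x1 \in fibre f x by rewrite -ABx !inE eqxx.
  by rewrite inE eq_sym -fibre_eq -/A => /eqP AE; rewrite ABx AE eqxx in ABA.
split.
  apply/existsP; exists A; apply/andP; split=> //.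
  apply/existsP; exists B; apply/and3P; split=> //.
  by rewrite fibre_partition_relabel.
rewrite fibre_partition_relabel setUC cardsU1 ABnP.
rewrite (cardsD1 A (fibre_partition f)) AP (cardsD1 B (fibre_partition f :\ A)).
by rewrite !inE BP eq_sym AB.
Qed.

End Merge.

End FibrePartition.

Section ContractionFromInvariant.
Variables (T : finType) (black red : rel T) (inv : {set {set T}} -> Prop).
Hypothesis inv_merge : forall P, inv P -> 1 < #|P| ->
  exists Q, [/\ merge_step P Q, #|Q| = #|P|.-1 & inv Q].

Lemma inv_merge_path N (P : {set {set T}}) : #|P| = N.+1 -> inv P ->
  exists s, [/\ path (@merge_step T) P s, size s = N & {in P :: s, forall Q, inv Q}].
Proof.
elim: N P => [|N IHN] P cardP invP.
  by exists [::]; split=> // Q; rewrite inE => /eqP ->.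
have [Q [PQ cardQ invQ]] := inv_merge invP (ltac:(by rewrite cardP)).
have [s [Qs sizes invs]] := IHN Q (ltac:(by rewrite cardQ cardP)) invQ.
exists (Q :: s); split=> /=; [by rewrite PQ | by rewrite sizes |].
by move=> R; rewrite inE => /predU1P [-> | /invs].
Qed.

Lemma tww_le_of_inv k : 0 < #|T| -> inv (singleton_partition T) ->
  (forall P, inv P -> quotient_width black red P <= k) -> tww_le black red k.
Proof.
move=> T0 inv1 width_inv.
have card1 : #|singleton_partition T| = #|T|.-1.+1.
  by rewrite card_imset ?prednK //; apply: set1_inj.
have [s [path_s size_s inv_s]] := inv_merge_path card1 inv1.
exists (singleton_partition T :: s); split.
  by split=> //=; rewrite size_s prednK.
by apply/bigmax_leqP_seq => P Ps _; apply/width_inv/inv_s.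
Qed.

End ContractionFromInvariant.

Section HomogeneousLabelling.
Variables (T : finType) (L : eqType) (e : rel T) (f : T -> L).
Variables (adjL : L -> L -> bool) (cand : L -> seq L).
Hypothesis e_by_labels : forall x y,
  f x != f y -> f y \notin cand (f x) -> e x y = adjL (f x) (f y).

Lemma qred_fibre_mem_cand x y :
  qred e (fun _ _ => false) (fibre f x) (fibre f y) -> f y \in cand (f x).
Proof.
case/and3P; rewrite fibre_eq => fxy.
case/forall_inPn => x1 x1x /forall_inPn [y1 y1y not_e1].
case/forall_inPn => x2 x2x /forall_inPn [y2 y2y]; rewrite /tedge orbF negbK => e2.
move: x1x x2x y1y y2y; rewrite !inE => /eqP fx1 /eqP fx2 /eqP fy1 /eqP fy2.
apply: contraT => not_cand.
have e1 : e x1 y1 = adjL (f x) (f y) by rewrite e_by_labels fx1 ?fy1.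
have e2' : e x2 y2 = adjL (f x) (f y) by rewrite e_by_labels fx2 ?fy2.
by rewrite e1 -e2' e2 in not_e1.
Qed.

Lemma quotient_width_fibre_le k : (forall x, size (cand (f x)) <= k) ->
  quotient_width e (fun _ _ => false) (fibre_partition f) <= k.
Proof.
move=> size_cand; apply/bigmax_leqP => _ /fibre_partitionP [x ->].
pose fibre_of (l : L) := [set y | f y == l].
have red_sub : [set W in fibre_partition f | qred e (fun _ _ => false) (fibre f x) W]
    \subset [seq fibre_of l | l <- cand (f x)].
  apply/subsetP => W; rewrite inE => /andP [/fibre_partitionP [y ->]].
  move=> /qred_fibre_mem_cand /(map_f fibre_of).
  by congr (_ \in _); apply/setP => z; rewrite !inE.
apply: leq_trans (subset_leq_card red_sub) _.
by apply: leq_trans (card_size _) _; rewrite size_map.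
Qed.

End HomogeneousLabelling.

Definition pair_adj (a b c d : nat) : bool :=
  ((a == c) || (a == d) || (b == c) || (b == d)) && ~~ ((a == c) && (b == d)).

Lemma pair_adj_lt3 a b c d : a < b < 3 -> c < d < 3 -> (a != c) || (b != d) -> pair_adj a b c d.
Proof. rewrite /pair_adj; lia. Qed.

(* The label of {a < b} in P(k,m): (a, b) for a singleton part, (a, n) for the star
   of a and (n, n) for the last part; n is never an element of a pair. *)
Definition jlabel (n k m a b : nat) : nat * nat :=
  if (b < k.-1) || ((b == k.-1) && (m <= a)) then (a, b)
  else if a < k then (a, n) else (n, n).

Variant jlabel_spec n k m a b : nat * nat -> Type :=
  | JLabelPair of (b < k.-1) || ((b == k.-1) && (m <= a)) : jlabel_spec n k m a b (a, b)
  | JLabelStar of ~~ ((b < k.-1) || ((b == k.-1) && (m <= a))) & a < k :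
      jlabel_spec n k m a b (a, n)
  | JLabelRest of ~~ ((b < k.-1) || ((b == k.-1) && (m <= a))) & k <= a :
      jlabel_spec n k m a b (n, n).

Lemma jlabelP n k m a b : jlabel_spec n k m a b (jlabel n k m a b).
Proof.
rewrite /jlabel; case: ifP => h; first exact: JLabelPair.
by case: ifP => h'; [apply: JLabelStar | apply: JLabelRest]; rewrite ?h //; lia.
Qed.

Lemma jlabel_k0 n m a b : 0 < b -> jlabel n 0 m a b = (n, n).
Proof. by case: jlabelP => //; lia. Qed.

Lemma jlabel_top_inj n a b c d : a < b < n -> c < d < n ->
  jlabel n n.-1 0 a b = jlabel n n.-1 0 c d -> a = c /\ b = d.
Proof.
by move=> ab cd /eqP; rewrite /jlabel; repeat case: ifP => ?; rewrite /= xpair_eqE; lia.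
Qed.

Ltac jlabel_cases :=
  rewrite /relabel; repeat case: jlabelP => /= *;
  rewrite ?xpair_eqE; try case: ifP => /= *; try (apply/eqP; rewrite xpair_eqE).

Lemma jlabel_succ_m n k m a b : m < k.-1 -> a < b < n ->
  jlabel n k m.+1 a b = relabel (m, k.-1) (m, n) (jlabel n k m a b).
Proof. move=> *; jlabel_cases; lia. Qed.

Lemma jlabel_pred_k n k a b : 0 < k -> a < b < n ->
  jlabel n k.-1 0 a b = relabel (k.-1, n) (n, n) (jlabel n k k.-1 a b).
Proof. move=> *; jlabel_cases; lia. Qed.

Lemma jlabel_eq_top n a b c d : 3 <= n -> a < b < n -> c < d < n ->
  (jlabel n n.-1 (n - 2) a b == jlabel n n.-1 (n - 2) c d) =
  (jlabel n (n - 2) 0 a b == jlabel n (n - 2) 0 c d).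
Proof. by move=> *; do 4 case: jlabelP => /= *; rewrite ?xpair_eqE; lia. Qed.

(* For k = n - 1 the star of n - 2 is the single pair {n-2, n-1}, which is adjacent to
   every pair of every other star; hence the bound minn k (n - 2). *)
Definition red_candidate (n k m : nat) (lu l : nat * nat) : bool :=
  if lu.2 < n then (l.2 == n) && (l.1 < m)
  else if lu.1 < n then
    [|| (l.2 == n) && (l.1 < minn k (n - 2)) && (l.1 != lu.1),
        (l.1 == n) && (l.2 == n) && (k <= n - 2) |
        (lu.1 < m) && (l.2 == k.-1) && (m <= l.1 < k.-1)]
  else (l.2 == n) && (l.1 < k).

Definition red_candidates (n k m : nat) (lu : nat * nat) : seq (nat * nat) :=
  if lu.2 < n then [seq (x, n) | x <- iota 0 m]
  else if lu.1 < n then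
    [seq (x, n) | x <- iota 0 (minn k (n - 2)) & x != lu.1] ++ nseq (k <= n - 2) (n, n) ++
    (if lu.1 < m then [seq (x, k.-1) | x <- iota m (k.-1 - m)] else [::])
  else [seq (x, n) | x <- iota 0 k].

Lemma red_candidate_mem n k m lu l :
  red_candidate n k m lu l -> l \in red_candidates n k m lu.
Proof.
case: l => x y; rewrite /red_candidate /red_candidates /=.
case: ifP => _; first by case/andP => /eqP -> xm; apply/map_f; rewrite mem_iota.
case: ifP => _; last by case/andP => /eqP -> xk; apply/map_f; rewrite mem_iota.
rewrite !mem_cat; case/or3P => [/andP [/andP [/eqP -> xk] xlu] | /andP [/andP [/eqP -> /eqP ->] kn] |].
- by rewrite (map_f (fun x => (x, n))) // mem_filter xlu mem_iota.
- by rewrite mem_nseq kn eqxx orbT.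
case/andP => /andP [lum /eqP ->] mxk; rewrite lum (map_f (fun x => (x, k.-1))) ?orbT //.
by rewrite mem_iota; lia.
Qed.

Lemma size_red_candidates n k m a b : 4 <= n -> k <= n.-1 -> m <= k.-1 -> a < b < n ->
  size (red_candidates n k m (jlabel n k m a b)) <= 2 * (n - 3).
Proof.
move=> n4 kn mk abn; have [an bn] : a < n /\ b < n by lia.
case: jlabelP => [_ | ns ak | _ ka]; rewrite /red_candidates /= ?ltnn ?an ?bn /=.
- by rewrite size_map size_iota; lia.
- rewrite size_cat size_map size_filter size_cat size_nseq.
  set s := iota 0 (minn k (n - 2)).
  have : count (pred1 a) s + count (fun x => x != a) s = size s := count_predC _ s.
  rewrite count_uniq_mem ?iota_uniq // mem_iota size_iota.
  by case: (leqP k (n - 2)); case: ifP; rewrite ?size_map ?size_iota /=; lia.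
- by rewrite size_map size_iota; lia.
Qed.

Definition label_adj (n : nat) (lu l : nat * nat) : bool :=
  if (lu.2 < n) && (l.2 < n) then pair_adj lu.1 lu.2 l.1 l.2
  else if (lu.2 < n) && (l.1 < n) then (l.1 == lu.1) || (l.1 == lu.2)
  else if (lu.1 < n) && (l.2 < n) then (lu.1 == l.1) || (lu.1 == l.2)
  else (lu.1 < n) && (l.1 < n).

Lemma pair_adj_jlabel n k m a b c d : k <= n.-1 -> m <= k.-1 -> a < b < n -> c < d < n ->
  jlabel n k m a b != jlabel n k m c d ->
  ~~ red_candidate n k m (jlabel n k m a b) (jlabel n k m c d) ->
  pair_adj a b c d = label_adj n (jlabel n k m a b) (jlabel n k m c d).
Proof.
move=> kn mk ab cd.
have [an bn cn dn] : [/\ a < n, b < n, c < n & d < n] by split; lia.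
case: jlabelP => [s1|s1 t1|s1 t1]; case: jlabelP => [s2|s2 t2|s2 t2];
rewrite /red_candidate /label_adj /pair_adj /= ?xpair_eqE ?ltnn ?an ?bn ?cn ?dn /=.
all: repeat (case: eqP => ? /=); rewrite ?andbF ?andbT ?orbF ?orbT //=; lia.
Qed.

Lemma card_set2I (T : finType) (x y : T) (S : {set T}) :
  x != y -> #|[set x; y] :&: S| = (x \in S) + (y \in S).
Proof.
move=> xy; have uniq_s : uniq [seq z <- [:: x; y] | z \in S].
  by rewrite filter_uniq //= inE xy.
transitivity (size [seq z <- [:: x; y] | z \in S]); last by rewrite size_filter /= addn0.
by rewrite -(card_uniqP uniq_s); apply: eq_card => z; rewrite !inE mem_filter !inE andbC.
Qed.

Section JohnsonGraph.
Variable n : nat.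
Local Notation V := (johnson_vertex n).
Implicit Types u v : V.

Definition hi v : nat := \max_(i in val v) (i : nat).
Definition lo v : nat := (\sum_(i in val v) (i : nat)) - hi v.

Lemma johnson_vertexP v : exists x y : 'I_n, x < y /\ val v = [set x; y].
Proof.
have /cards2P [x [y [xy ->]]] := valP v.
case: (ltngtP x y) => [lt_xy | lt_yx | /val_inj eq_xy].
- by exists x, y.
- by exists y, x; rewrite setUC.
- by rewrite eq_xy eqxx in xy.
Qed.

Lemma lo_hi_set2 v (x y : 'I_n) : x < y -> val v = [set x; y] -> lo v = x /\ hi v = y.
Proof.
move=> xy vE; have xny : x \notin [set y] by rewrite inE -val_eqE /= neq_ltn xy.
have hiE : hi v = y by rewrite /hi vE big_setU1 // big_set1; apply/maxn_idPr/ltnW.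
by rewrite /lo hiE vE big_setU1 // big_set1 addnK.
Qed.

Lemma lo_lt_hi v : lo v < hi v < n.
Proof.
have [x [y [xy vE]]] := johnson_vertexP v.
by have [-> ->] := lo_hi_set2 xy vE; rewrite xy ltn_ord.
Qed.

Lemma johnson_adjE u v : johnson_adj n u v = pair_adj (lo u) (hi u) (lo v) (hi v).
Proof.
have [x [y [xy uE]]] := johnson_vertexP u; have [x' [y' [xy' vE]]] := johnson_vertexP v.
have [-> ->] := lo_hi_set2 xy uE; have [-> ->] := lo_hi_set2 xy' vE.
rewrite /johnson_adj uE vE card_set2I -?val_eqE ?neq_ltn ?xy // !inE -!val_eqE /=.
by rewrite /pair_adj; lia.
Qed.

Lemma lo_hi_inj u v : lo u = lo v -> hi u = hi v -> u = v.
Proof.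
have [x [y [xy uE]]] := johnson_vertexP u; have [x' [y' [xy' vE]]] := johnson_vertexP v.
have [-> ->] := lo_hi_set2 xy uE; have [-> ->] := lo_hi_set2 xy' vE.
by move=> /val_inj xx' /val_inj yy'; apply: val_inj; rewrite uE vE xx' yy'.
Qed.

Lemma lo_hi_surj a b : a < b < n -> exists v, lo v = a /\ hi v = b.
Proof.
case/andP => ab bn; have an : a < n by apply: ltn_trans bn.
pose x := Ordinal an; pose y := Ordinal bn.
have card_xy : #|[set x; y]| == 2 by rewrite cards2 -val_eqE /= neq_ltn ab.
by exists (exist _ [set x; y] card_xy); apply: (@lo_hi_set2 _ x y).
Qed.

Definition jlabelling k m v : nat * nat := jlabel n k m (lo v) (hi v).

Definition johnson_stage (P : {set {set V}}) : Prop :=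
  exists k m, [/\ k <= n.-1, m <= k.-1 & P = fibre_partition (jlabelling k m)].

Lemma quotient_width_jlabelling k m : 3 <= n -> k <= n.-1 -> m <= k.-1 ->
  quotient_width (johnson_adj n) (fun _ _ => false) (fibre_partition (jlabelling k m))
  <= 2 * (n - 3).
Proof.
move=> n3 kn mk; have [n_eq3 | n_neq3] := eqVneq n 3.
  apply: (quotient_width_fibre_le (adjL := fun _ _ => true) (cand := fun _ => [::])) => // u v.
  move=> fuv _; rewrite johnson_adjE pair_adj_lt3 -?n_eq3 ?lo_lt_hi //.
  by apply: contraNT fuv; rewrite negb_or !negbK /jlabelling => /andP [/eqP -> /eqP ->].
apply: (quotient_width_fibre_le (adjL := label_adj n) (cand := red_candidates n k m)).
  move=> u v fuv not_cand; rewrite johnson_adjE.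
  apply: pair_adj_jlabel; rewrite ?lo_lt_hi //.
  by apply: contra not_cand; apply: red_candidate_mem.
by move=> v; apply: size_red_candidates; rewrite ?lo_lt_hi //; lia.
Qed.

Lemma jlabelling_top_inj : injective (jlabelling n.-1 0).
Proof.
move=> u v /jlabel_top_inj [] //; rewrite ?lo_lt_hi //.
exact: lo_hi_inj.
Qed.

Lemma johnson_stage_singleton : johnson_stage (singleton_partition V).
Proof.
exists n.-1, 0; split=> //; apply: eq_imset => v.
by apply/setP => u; rewrite !inE (inj_eq jlabelling_top_inj).
Qed.

Lemma johnson_stage_relabel k m k' m' (x1 x2 : V) : k' <= n.-1 -> m' <= k'.-1 ->
  jlabelling k m x1 != jlabelling k m x2 ->
  jlabelling k' m' =1 relabel (jlabelling k m x1) (jlabelling k m x2) \o jlabelling k m ->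
  exists Q, [/\ merge_step (fibre_partition (jlabelling k m)) Q,
    #|Q| = #|fibre_partition (jlabelling k m)|.-1 & johnson_stage Q].
Proof.
move=> kn mk f12 gE; have [merge card] := merge_step_fibre_partition f12 gE.
by exists (fibre_partition (jlabelling k' m')); split=> //; exists k', m'.
Qed.

Lemma johnson_stage_merge_core k m :
  0 < k -> k <= n.-1 -> m <= k.-1 -> (m < k.-1) || (k <= n - 2) ->
  exists Q, [/\ merge_step (fibre_partition (jlabelling k m)) Q,
    #|Q| = #|fibre_partition (jlabelling k m)|.-1 & johnson_stage Q].
Proof.
move=> k0 kn mk; case: (ltnP m k.-1) => [mk1 _ | km1 kn2].
  have [x1 [lo1 hi1]] := @lo_hi_surj m k.-1 (ltac:(lia)).
  have [x2 [lo2 hi2]] := @lo_hi_surj m k (ltac:(lia)).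
  have f1 : jlabelling k m x1 = (m, k.-1).
    by rewrite /jlabelling lo1 hi1; case: jlabelP => //; lia.
  have f2 : jlabelling k m x2 = (m, n).
    by rewrite /jlabelling lo2 hi2; case: jlabelP => //; lia.
  apply: (@johnson_stage_relabel k m k m.+1 x1 x2); rewrite ?f1 ?f2 ?xpair_eqE; try lia.
  by move=> v; rewrite /jlabelling jlabel_succ_m ?lo_lt_hi.
have {km1 mk} -> : m = k.-1 by lia.
have [x1 [lo1 hi1]] := @lo_hi_surj k.-1 k (ltac:(lia)).
have [x2 [lo2 hi2]] := @lo_hi_surj k k.+1 (ltac:(lia)).
have f1 : jlabelling k k.-1 x1 = (k.-1, n).
  by rewrite /jlabelling lo1 hi1; case: jlabelP => //; lia.
have f2 : jlabelling k k.-1 x2 = (n, n).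
  by rewrite /jlabelling lo2 hi2; case: jlabelP => //; lia.
apply: (@johnson_stage_relabel k k.-1 k.-1 0 x1 x2); rewrite ?f1 ?f2 ?xpair_eqE; try lia.
by move=> v; rewrite /jlabelling jlabel_pred_k ?lo_lt_hi.
Qed.

Lemma johnson_stage_merge P : 3 <= n -> johnson_stage P -> 1 < #|P| ->
  exists Q, [/\ merge_step P Q, #|Q| = #|P|.-1 & johnson_stage Q].
Proof.
move=> n3 [k [m [kn mk ->]]] cardP.
have k0 : 0 < k.
  rewrite lt0n; apply: contraTneq cardP => k0; rewrite -leqNgt.
  have sub1 : fibre_partition (jlabelling k m) \subset [set [set: V]].
    apply/subsetP => _ /fibre_partitionP [v ->]; rewrite inE; apply/eqP/setP => u.
    have /andP [hi_u _] := lo_lt_hi u; have /andP [hi_v _] := lo_lt_hi v.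
    by rewrite !inE /jlabelling k0 !jlabel_k0 ?eqxx //; lia.
  by rewrite (leq_trans (subset_leq_card sub1)) ?cards1.
have [core | ] := boolP ((m < k.-1) || (k <= n - 2)); first exact: johnson_stage_merge_core.
move=> /norP [/negbTE mk1 /negbTE kn2]; have [-> ->] : k = n.-1 /\ m = n - 2 by lia.
have -> : fibre_partition (jlabelling n.-1 (n - 2)) = fibre_partition (jlabelling (n - 2) 0).
  by apply: eq_fibre_partition => u v; rewrite /jlabelling jlabel_eq_top ?lo_lt_hi.
by apply: johnson_stage_merge_core; lia.
Qed.

End JohnsonGraph.

Theorem mainTheorem18 (n : nat) (hn : 3 <= n) :
  graph_tww_le (johnson_adj n) (2 * (n - 3)).
Proof.
apply: (tww_le_of_inv (inv := @johnson_stage n)).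
- by move=> P; apply: johnson_stage_merge.
- have [v _] := @lo_hi_surj n 0 1 (ltac:(lia)).
  by apply/card_gt0P; exists v.
- exact: johnson_stage_singleton.
- by move=> _ [k [m [kn mk ->]]]; apply: quotient_width_jlabelling.
Qed.
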